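(* There exist quantum predictions in the two-superobserver, two-friend extended Wigner's friend scenario that are incompatible with Possibilistic Local Friendliness. Precisely, there exist the following data: - a state $|\Psi\rangle$ on $\mathcal H_A\otimes\mathcal H_B$, where $\mathcal H_A$ (Charlie's laboratory, including his system) contains orthonormal record states $|C_0\rangle,|C_1\rangle$ and $\mathcal H_B$ (Debbie's laboratory) contains orthonormal record states $|D_0\rangle,|D_1\rangle$; - projective measurements $\{A_x(a)\}_{a\in\{0,1\}}$ on $\mathcal H_A$ and $\{B_y(b)\}_{b\in\{0,1\}}$ on $\mathcal H_B$, where $x,y\in\{1,2\}$, and where $A_1$ and $B_1$ are the record-readout measurements ($A_1(0)=|C_0\rangle\langle C_0|$, $A_1(1)=I-|C_0\rangle\langle C_0|$, and similarly for $B_1$ with $|D_0\rangle$). For these data, the possibility set $S=\{(a,b,x,y): \langle\Psi|A_x(a)\otimes B_y(b)|\Psi\rangle>0\}$ admits no Possibilistic Local Friendliness model reproducing it.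
   Context: Scenario. Two space-like separated superobservers, Alice and Bob, have friends Charlie and Debbie respectively. Each friend measures a system inside a sealed laboratory. - Charlie and Debbie record outcomes $C=c\in\{0,1\}$ and $D=d\in\{0,1\}$. - Alice chooses $X=x\in\{1,2\}$ and observes $A=a\in\{0,1\}$. Bob chooses $Y=y\in\{1,2\}$ and observes $B=b\in\{0,1\}$. - Setting $X=1$ means Alice asks Charlie for his result and sets $A=C$. Setting $Y=1$ means Bob asks Debbie and sets $B=D$. - Spacetime relations: $X$ is not in the past light cone of any of $B,Y,C,D$, and $Y$ is not in the past light cone of any of $A,X,C,D$. Possibilistic Local Friendliness (PLF) model for a possibility set $S\subseteq\{0,1\}^2\times\{1,2\}^2$. This is a set $T\subseteq\{0,1\}^4\times\{1,2\}^2$ of possible joint assignments $(a,b,c,d,x,y)$. By Absoluteness of Observed Events, every observed variable, including $C$ and $D$, has a definite value in every run. $T$ must satisfy the following. - Every $t\in T$ with $x=1$ has $a=c$, and every $t\in T$ with $y=1$ has $b=d$. - Possibilistic Local Agency: call a partial assignment $E$ possible if it agrees with some element of $T$. If $E$ is possible, then for any intervention $Z\in\{X,Y\}$ not in the past light cone of any variable assigned in $E$, and for every value $z$, the assignment $E$ together with $Z=z$ is possible. - The projection of $T$ onto $(a,b,x,y)$ equals $S$. *)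

(* algebraic complex numbers algC, finite-dimensional Hilbert spaces
   represented by column vectors 'cV[algC]_d, tensor product by mxtens' tensmx. *)
From mathcomp Require Import all_boot all_order all_algebra.
From mathcomp Require Import algC.
From mathcomp Require Import mxtens.
Set Implicit Arguments. Unset Strict Implicit. Unset Printing Implicit Defensive.
Import GRing.Theory Num.Theory.
Local Open Scope ring_scope.

(* outcomes a,b,c,d in {0,1} are encoded as bool: false = 0, true = 1 *)
Definition outcome := bool.
Inductive setting := s1 | s2.

Record run := Run { ra : outcome; rb : outcome; rc : outcome; rd : outcome;
                    rx : setting; ry : setting }.

Definition possset := outcome -> outcome -> setting -> setting -> Prop.

Record passign := PA { pa : option outcome; pb : option outcome;
                       pc : option outcome; pd : option outcome;
                       px : option setting; py : option setting }.

Definition agree_opt {V : Type} (o : option V) (v : V) : Prop :=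
  match o with Some w => v = w | None => True end.

Definition agrees (E : passign) (t : run) : Prop :=
  [/\ agree_opt (pa E) (ra t), agree_opt (pb E) (rb t), agree_opt (pc E) (rc t),
      agree_opt (pd E) (rd t) & agree_opt (px E) (rx t) /\ agree_opt (py E) (ry t)].

Definition possible (T : run -> Prop) (E : passign) : Prop :=
  exists t, T t /\ agrees E t.

Definition withX (E : passign) (z : setting) : passign :=
  PA (pa E) (pb E) (pc E) (pd E) (Some z) (py E).
Definition withY (E : passign) (z : setting) : passign :=
  PA (pa E) (pb E) (pc E) (pd E) (px E) (Some z).

(* Possibilistic Local Agency with the given spacetime relations:
   X is (only) known not to be in the past light cone of B,Y,C,D, so X may be
   intervened on when E assigns only variables among B,Y,C,D;
   Y is (only) known not to be in the past light cone of A,X,C,D. *)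
Definition plocal_agency (T : run -> Prop) : Prop :=
  forall E : passign, possible T E ->
    (pa E = None -> px E = None -> forall z, possible T (withX E z)) /\
    (pb E = None -> py E = None -> forall z, possible T (withY E z)).

Definition PLF_model (S : possset) (T : run -> Prop) : Prop :=
  [/\ (forall t, T t -> rx t = s1 -> ra t = rc t),
      (forall t, T t -> ry t = s1 -> rb t = rd t),
      plocal_agency T &
      (forall a b x y, S a b x y <-> exists c d, T (Run a b c d x y))].

Definition admits_PLF_model (S : possset) : Prop := exists T, PLF_model S T.

Definition adjmx {m n : nat} (M : 'M[algC]_(m, n)) : 'M[algC]_(n, m) :=
  (map_mx (@Num.conj_op _) M)^T.

Definition braket {n : nat} (u v : 'cV[algC]_n) : algC := (adjmx u *m v) 0 0.
Definition expval {n : nat} (M : 'M[algC]_n) (v : 'cV[algC]_n) : algC :=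
  (adjmx v *m M *m v) 0 0.

Definition unit_vector {n : nat} (v : 'cV[algC]_n) : Prop := braket v v = 1.

Definition projective_meas {n : nat} (P : outcome -> 'M[algC]_n) : Prop :=
  [/\ forall o, adjmx (P o) = P o,
      forall o, P o *m P o = P o &
      P false + P true = 1%:M].

Definition ketbra {n : nat} (v : 'cV[algC]_n) : 'M[algC]_n := v *m adjmx v.

Definition quantum_possset {dA dB : nat} (Psi : 'cV[algC]_(dA * dB))
  (A : setting -> outcome -> 'M[algC]_dA) (B : setting -> outcome -> 'M[algC]_dB)
  : possset :=
  fun a b x y => 0 < expval (tensmx (A x a) (B y b)) Psi.

(* Hardy's argument. A run with a = b = 0 and x = y = 2 is possible. Local
   agency lets Bob switch to y = 1 keeping a, c, d, x; then b = d, and since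
   (a,b,x,y) = (0,1,2,1) is impossible, d = 0. Symmetrically c = 0. Switching
   both settings to 1 keeping c = d = 0 gives a possible run with a = b = 0 and
   x = y = 1, which is impossible as well. Hardy's two-qubit state realises
   these four possibilistic predictions when the second measurement of each
   party projects onto u = (|0> + 2|1>)/sqrt 5 and its orthogonal complement. *)
From mathcomp Require Import all_boot all_order all_algebra.
From mathcomp Require Import algC.
From mathcomp Require Import mxtens.
From mathcomp Require Import ring.
Set Implicit Arguments. Unset Strict Implicit. Unset Printing Implicit Defensive.
Import Order.TTheory GRing.Theory Num.Theory.
Local Open Scope ring_scope.

Section PLFModel.

Variables (S : possset) (T : run -> Prop).
Hypothesis PLF_T : PLF_model S T.

Lemma PLF_run_possible t : T t -> S (ra t) (rb t) (rx t) (ry t).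
Proof. by case: PLF_T => _ _ _ ST Tt; apply/ST; exists (rc t), (rd t); case: t Tt. Qed.

Lemma PLF_readout_B t : T t -> S (ra t) (rd t) (rx t) s1.
Proof.
case: PLF_T => _ readB agency _ Tt.
have Et : possible T (PA (Some (ra t)) None (Some (rc t)) (Some (rd t)) (Some (rx t)) None).
  by exists t.
have [_ /(_ erefl erefl s1) [t' [Tt' [/= Ea _ _ Ed [Ex Ey]]]]] := agency _ Et.
by move: (PLF_run_possible Tt'); rewrite (readB _ Tt' Ey) Ea Ed Ex Ey.
Qed.

Lemma PLF_readout_A t : T t -> S (rc t) (rb t) s1 (ry t).
Proof.
case: PLF_T => readA _ agency _ Tt.
have Et : possible T (PA None (Some (rb t)) (Some (rc t)) (Some (rd t)) None (Some (ry t))).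
  by exists t.
have [/(_ erefl erefl s1) [t' [Tt' [/= _ Eb Ec _ [Ex Ey]]]] _] := agency _ Et.
by move: (PLF_run_possible Tt'); rewrite (readA _ Tt' Ex) Eb Ec Ex Ey.
Qed.

Lemma PLF_readout_AB t : T t -> S (rc t) (rd t) s1 s1.
Proof.
case: PLF_T => readA readB agency _ Tt.
have Et : possible T (PA None None (Some (rc t)) (Some (rd t)) None None).
  by exists t.
have [/(_ erefl erefl s1) EXt _] := agency _ Et.
have [_ /(_ erefl erefl s1) [t' [Tt' [/= _ _ Ec Ed [Ex Ey]]]]] := agency _ EXt.
by move: (PLF_run_possible Tt'); rewrite (readA _ Tt' Ex) (readB _ Tt' Ey) Ec Ed Ex Ey.
Qed.

End PLFModel.

Lemma Hardy_no_PLF_model (S : possset) :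
  S false false s2 s2 -> ~ S false true s2 s1 -> ~ S true false s1 s2 ->
  ~ S false false s1 s1 -> ~ admits_PLF_model S.
Proof.
move=> S22 nS21 nS12 nS11 [T PLF_T].
have [c [d Tt]] : exists c d, T (Run false false c d s2 s2).
  by case: PLF_T => _ _ _ ST; apply/ST.
move: (PLF_readout_A PLF_T Tt) (PLF_readout_B PLF_T Tt) (PLF_readout_AB PLF_T Tt).
by case: c {Tt}; case: d.
Qed.

Definition mx2 {R : Type} (a b c d : R) : 'M[R]_2 :=
  \matrix_(i, j) if i == 0 :> nat then (if j == 0 :> nat then a else b)
                 else (if j == 0 :> nat then c else d).

Lemma forall_ord2 (P : 'I_2 -> Prop) : P ord0 -> P ord_max -> forall i, P i.
Proof.
move=> P0 P1 [[|[|//]] lt_i2].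
- by rewrite (_ : Ordinal lt_i2 = ord0) //; apply: val_inj.
- by rewrite (_ : Ordinal lt_i2 = ord_max) //; apply: val_inj.
Qed.

Lemma big_ord2 (R : nmodType) (F : 'I_2 -> R) : \sum_(i < 2) F i = F ord0 + F ord_max.
Proof. by rewrite big_ord_recl big_ord1; congr (_ + F _); apply: val_inj. Qed.

Ltac mx2_entries := apply/matrixP; apply: forall_ord2; apply: forall_ord2; rewrite !mxE /=.

Lemma mulmx_mx2 (R : pzRingType) (a b c d a' b' c' d' : R) :
  mx2 a b c d *m mx2 a' b' c' d' =
  mx2 (a * a' + b * c') (a * b' + b * d') (c * a' + d * c') (c * b' + d * d').
Proof. by mx2_entries; rewrite big_ord2 !mxE. Qed.

Lemma addmx_mx2 (R : nmodType) (a b c d a' b' c' d' : R) :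
  mx2 a b c d + mx2 a' b' c' d' = mx2 (a + a') (b + b') (c + c') (d + d').
Proof. by mx2_entries. Qed.

Lemma scalar_mx_mx2 (R : pzRingType) (a : R) : a%:M = mx2 a 0 0 a.
Proof. by mx2_entries. Qed.

Lemma adjmx_mx2 (a b c d : algC) : adjmx (mx2 a b c d) = mx2 a^* c^* b^* d^*.
Proof. by mx2_entries. Qed.

Section AmplitudeKet.

Variables m n : nat.

Lemma sum_mxtens (R : nmodType) (F : 'I_(m * n) -> R) :
  \sum_k F k = \sum_(i < m) \sum_(j < n) F (@mxtens_index m n (i, j)).
Proof.
have idx_bij : bijective (@mxtens_index m n).
  by exists (@mxtens_unindex m n); [exact: mxtens_indexK | exact: mxtens_unindexK].
by rewrite (reindex _ (onW_bij _ idx_bij)) pair_bigA; apply: eq_bigr => -[i j].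
Qed.

Definition amplitude_ket (W : 'M[algC]_(m, n)) : 'cV[algC]_(m * n) :=
  \col_k W (@mxtens_unindex m n k).1 (@mxtens_unindex m n k).2.

Lemma amplitude_ketE W i j : amplitude_ket W (@mxtens_index m n (i, j)) 0 = W i j.
Proof. by rewrite mxE mxtens_indexK. Qed.

Lemma adjmx_amplitude_ketE W i j :
  adjmx (amplitude_ket W) 0 (@mxtens_index m n (i, j)) = (W i j)^*.
Proof. by rewrite mxE mxE amplitude_ketE. Qed.

Lemma braket_amplitude_ket W :
  braket (amplitude_ket W) (amplitude_ket W) = \sum_i \sum_j (W i j)^* * W i j.
Proof.
rewrite /braket mxE sum_mxtens.
by apply: eq_bigr => i _; apply: eq_bigr => j _; rewrite adjmx_amplitude_ketE amplitude_ketE.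
Qed.

Lemma expval_tensmx_amplitude_ket (P : 'M_m) (Q : 'M_n) W :
  expval (tensmx P Q) (amplitude_ket W) =
  \sum_k \sum_l \sum_i \sum_j (W i j)^* * (P i k * Q j l) * W k l.
Proof.
rewrite /expval mxE sum_mxtens.
apply: eq_bigr => k _; apply: eq_bigr => l _.
rewrite amplitude_ketE mxE big_distrl /= sum_mxtens.
apply: eq_bigr => i _; apply: eq_bigr => j _.
by rewrite adjmx_amplitude_ketE tensmxE.
Qed.

End AmplitudeKet.

Ltac simpl_conj :=
  rewrite ?(rmorphN, rmorphM, fmorphV, rmorph_nat, rmorph0, rmorph1, rmorphD, rmorphB).

Definition ket0 : 'cV[algC]_2 := \col_i if i == 0 :> nat then 1 else 0.
Definition ket1 : 'cV[algC]_2 := \col_i if i == 0 :> nat then 0 else 1.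

Lemma ket01_orthonormal :
  [/\ braket ket0 ket0 = 1, braket ket1 ket1 = 1 & braket ket0 ket1 = 0].
Proof. by split; rewrite /braket !mxE big_ord2 !mxE /=; simpl_conj; ring. Qed.

Definition proj0 : 'M[algC]_2 := mx2 1 0 0 0.
Definition proj1 : 'M[algC]_2 := mx2 0 0 0 1.
Definition proj_u : 'M[algC]_2 := mx2 (1/5) (2/5) (2/5) (4/5).
Definition proj_u_perp : 'M[algC]_2 := mx2 (4/5) (-(2/5)) (-(2/5)) (1/5).

Lemma ketbra_ket0 : ketbra ket0 = proj0.
Proof. by mx2_entries; rewrite big_ord1 !mxE /=; simpl_conj; ring. Qed.

Lemma subr_proj0 : 1%:M - proj0 = proj1.
Proof. by rewrite scalar_mx_mx2; mx2_entries; ring. Qed.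

Definition hardy_meas (x : setting) (o : outcome) : 'M[algC]_2 :=
  match x, o with
  | s1, false => ketbra ket0
  | s1, true => 1%:M - ketbra ket0
  | s2, false => proj_u
  | s2, true => proj_u_perp
  end.

Lemma hardy_meas_projective x : projective_meas (hardy_meas x).
Proof.
rewrite /projective_meas scalar_mx_mx2; split => [[]|[]|]; case: x => /=.
all: rewrite ?ketbra_ket0 ?subr_proj0 /proj0 /proj1 /proj_u /proj_u_perp.
all: by rewrite ?adjmx_mx2 ?mulmx_mx2 ?addmx_mx2; congr mx2; simpl_conj; field.
Qed.

(* Orthogonal to |00>, |u 1> and |1 u>, while <u u|psi> = -4/15. *)
Definition hardy_state : 'cV[algC]_(2 * 2) :=
  amplitude_ket (mx2 0 (-(2/3)) (-(2/3)) (1/3)).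

Ltac expand_hardy_state :=
  rewrite /hardy_state ?expval_tensmx_amplitude_ket ?braket_amplitude_ket !big_ord2
          /proj0 /proj1 /proj_u /mx2 !mxE /=; simpl_conj.

Lemma hardy_state_unit : unit_vector hardy_state.
Proof. by rewrite /unit_vector; expand_hardy_state; field. Qed.

Lemma expval_hardy_u_u : expval (tensmx proj_u proj_u) hardy_state = 16%:R / 225%:R.
Proof. by expand_hardy_state; field. Qed.

Lemma expval_hardy_u_1 : expval (tensmx proj_u proj1) hardy_state = 0.
Proof. by expand_hardy_state; field. Qed.

Lemma expval_hardy_1_u : expval (tensmx proj1 proj_u) hardy_state = 0.
Proof. by expand_hardy_state; field. Qed.

Lemma expval_hardy_0_0 : expval (tensmx proj0 proj0) hardy_state = 0.
Proof. by expand_hardy_state; field. Qed.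

Lemma hardy_no_PLF_model :
  ~ admits_PLF_model (quantum_possset hardy_state hardy_meas hardy_meas).
Proof.
apply: Hardy_no_PLF_model; rewrite /quantum_possset /= ?ketbra_ket0 ?subr_proj0.
- by rewrite expval_hardy_u_u divr_gt0 ?ltr0n.
- by rewrite expval_hardy_u_1 ltxx.
- by rewrite expval_hardy_1_u ltxx.
- by rewrite expval_hardy_0_0 ltxx.
Qed.

Theorem theorem5 :
  exists (dA dB : nat) (Psi : 'cV[algC]_(dA * dB))
         (C0 C1 : 'cV[algC]_dA) (D0 D1 : 'cV[algC]_dB)
         (A : setting -> outcome -> 'M[algC]_dA)
         (B : setting -> outcome -> 'M[algC]_dB),
    [/\ unit_vector Psi,
        (* orthonormal record states of Charlie and Debbie *)
        [/\ braket C0 C0 = 1, braket C1 C1 = 1 & braket C0 C1 = 0] /\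
        [/\ braket D0 D0 = 1, braket D1 D1 = 1 & braket D0 D1 = 0],
        (* projective measurements *)
        (forall x, projective_meas (A x)) /\ (forall y, projective_meas (B y)),
        (* A_1 and B_1 read out the records *)
        [/\ A s1 false = ketbra C0, A s1 true = 1%:M - ketbra C0,
            B s1 false = ketbra D0 & B s1 true = 1%:M - ketbra D0] &
        ~ admits_PLF_model (quantum_possset Psi A B)].
Proof.
exists 2%N, 2%N, hardy_state, ket0, ket1, ket0, ket1, hardy_meas, hardy_meas.
split => //.
- exact: hardy_state_unit.
- by split; exact: ket01_orthonormal.
- by split; exact: hardy_meas_projective.
- exact: hardy_no_PLF_model.
Qed.
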